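(* Let $S$ be a qubit with Hamiltonian $H_S=E|1\rangle\langle 1|$, $E>0$, and let $\beta>0$. Assume the initial state of $S$ is diagonal in the energy eigenbasis with $p^{(0)}_0\ge p^{(0)}_1$. Then the optimal cooling protocol in $\mathcal{P}_\emptyset$ (maximizing the ground state population $p_0^{(k)}$ after every number $k$ of rounds) is the one in which in each round (1) the Pauli $X$ unitary is applied to $S$ and (2) the $\beta$-swap $\Lambda_\beta$ is applied to $S$. The ground state population after round $k$ is $p^{(k)}_0=1-e^{-k\beta E}(1-p^{(0)}_0)$, and $p^{(k)}_0\to1$ as $k\to\infty$.
   Context: A dephasing thermalization on $S$ is a quantum channel $\Lambda$ with $\Lambda(\tau_S)=\tau_S$, where $\tau_S=e^{-\beta H_S}/\mathrm{tr}[e^{-\beta H_S}]$, and $\langle 0|\Lambda(\rho)|1\rangle=0$ for all $\rho$. The protocol class $\mathcal{P}_\emptyset$ (no auxiliary systems): each round $k$ consists of an arbitrary unitary $U^{(k)}$ applied to $S$ followed by an arbitrary dephasing thermalization $\Lambda^{(k)}$ applied to $S$, so $\rho_S^{(k)}=\Lambda^{(k)}(U^{(k)}\rho_S^{(k-1)}U^{(k)\dagger})$; $p_0^{(k)}=\langle0|\rho_S^{(k)}|0\rangle$. The $\beta$-swap is the channel $\Lambda_\beta(\rho)=\sigma_-\rho\sigma_++e^{-\beta E}\sigma_+\rho\sigma_-+(1-e^{-\beta E})\sigma_-\sigma_+\rho\sigma_-\sigma_+$ with $\sigma_+=|1\rangle\langle0|$, $\sigma_-=|0\rangle\langle 1|$;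 it satisfies $\langle0|\Lambda_\beta(|1\rangle\langle1|)|0\rangle=1$ and $\langle1|\Lambda_\beta(|0\rangle\langle0|)|1\rangle=e^{-\beta E}$. *)

From HB Require Import structures.
From mathcomp Require Import all_boot all_order all_algebra.
From mathcomp Require Import complex.
From mathcomp Require Import all_classical all_reals all_analysis.
Set Implicit Arguments. Unset Strict Implicit. Unset Printing Implicit Defensive.
Import Order.TTheory GRing.Theory Num.Theory.
Local Open Scope ring_scope.
Local Open Scope complex_scope.

Section Qubit.
Variable R : realType.
Local Notation C := R[i].
Local Notation M2 := 'M[C]_2.

(* basis indices |0> (ground) and |1> (excited) *)
Definition i0 : 'I_2 := ord0.
Definition i1 : 'I_2 := ord_max.

Definition mxadj m n (A : 'M[C]_(m, n)) : 'M[C]_(n, m) := (map_mx conjc A)^T.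

Definition unitary (U : M2) : Prop := U *m mxadj U = 1%:M.

Definition psd (A : M2) : Prop :=
  mxadj A = A /\
  forall v : 'cV[C]_2,
    complex.Im ((mxadj v *m A *m v) ord0 ord0) = 0 /\ 0 <= complex.Re ((mxadj v *m A *m v) ord0 ord0).

Definition density (rho : M2) : Prop := psd rho /\ \tr rho = 1.

Definition channel (L : M2 -> M2) : Prop :=
  exists (n : nat) (K : 'I_n -> M2),
    \sum_(j < n) mxadj (K j) *m K j = 1%:M /\
    forall rho, L rho = \sum_(j < n) K j *m rho *m mxadj (K j).

(* Gibbs state of H_S = E |1><1| at inverse temperature beta *)
Definition gibbs (beta E : R) : M2 :=
  let Z := 1 + expR (- (beta * E)) in
  \matrix_(i, j) (if i == j then (if i == i0 then (1 / Z)%:C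
                                  else (expR (- (beta * E)) / Z)%:C)
                  else 0).

Definition dephasing_thermalization (beta E : R) (L : M2 -> M2) : Prop :=
  [/\ channel L, L (gibbs beta E) = gibbs beta E
    & forall rho, density rho -> L rho i0 i1 = 0].

(* Protocol in P_emptyset: round k (k >= 1) applies U (k) and then L (k). *)
Fixpoint evolve (U : nat -> M2) (L : nat -> M2 -> M2) (rho0 : M2) (k : nat) : M2 :=
  match k with
  | 0 => rho0
  | k'.+1 => L k (U k *m evolve U L rho0 k' *m mxadj (U k))
  end.

Definition p0 (rho : M2) : R := complex.Re (rho i0 i0).

Definition pauliX : M2 := \matrix_(i, j) (if i == j then 0 else 1).

Definition sigma_plus : M2 := delta_mx i1 i0.
Definition sigma_minus : M2 := delta_mx i0 i1.

Definition beta_swap (beta E : R) (rho : M2) : M2 :=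
  sigma_minus *m rho *m sigma_plus
  + (expR (- (beta * E)))%:C *: (sigma_plus *m rho *m sigma_minus)
  + (1 - expR (- (beta * E)))%:C *:
      (sigma_minus *m sigma_plus *m rho *m (sigma_minus *m sigma_plus)).

End Qubit.

(* Write e = exp(-beta E).  If rho - q 1 is positive semidefinite (the smallest
   eigenvalue of rho is at least q), then p0 rho <= 1 - q.  Unitary conjugation
   preserves this bound, and a dephasing thermalization L lowers it at most to
   e q: since L fixes the Gibbs state tau and 1 = (1 + e) tau + (1 - e)|1><1|,
   both diagonal entries of L 1 are at least e, so those of
   L rho = L (rho - q 1) + q L 1 are at least e q, and L rho is diagonal.
   Starting from q = p1 <= 1/2 this gives p0 <= 1 - e^k p1 after k rounds.
   Pauli X followed by the beta-swap attains the bound: X exchanges the two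
   populations and the beta-swap makes the excited one e times the ground one. *)

From HB Require Import structures.
From mathcomp Require Import all_boot all_order all_algebra.
From mathcomp Require Import complex.
From mathcomp Require Import all_classical all_reals all_analysis.
From mathcomp Require Import ring lra.
Set Implicit Arguments. Unset Strict Implicit. Unset Printing Implicit Defensive.
Import Order.TTheory GRing.Theory Num.Theory.
Import numFieldNormedType.Exports.
Local Open Scope ring_scope.
Local Open Scope complex_scope.

Lemma ord2P (i : 'I_2) : i = i0 \/ i = i1.
Proof. by case: i => [[|[|//]]] ?; [left | right]; apply: val_inj. Qed.

Lemma matrix2P (T : Type) (A B : 'M[T]_2) : A i0 i0 = B i0 i0 -> A i0 i1 = B i0 i1 ->
  A i1 i0 = B i1 i0 -> A i1 i1 = B i1 i1 -> A = B.
Proof.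
move=> h00 h01 h10 h11; apply/matrixP => i j.
by case: (ord2P i) => ->; case: (ord2P j) => ->.
Qed.

Lemma sum_ord2 (V : nmodType) (F : 'I_2 -> V) : \sum_(j < 2) F j = F i0 + F i1.
Proof. by rewrite big_ord_recl big_ord1; congr (_ + F _); apply: val_inj. Qed.

Lemma mxtrace2 (V : nmodType) (A : 'M[V]_2) : \tr A = A i0 i0 + A i1 i1.
Proof. exact: sum_ord2. Qed.

Lemma mulmx2E (K : pzSemiRingType) m n (A : 'M[K]_(m, 2)) (B : 'M[K]_(2, n)) i j :
  (A *m B) i j = A i i0 * B i0 j + A i i1 * B i1 j.
Proof. by rewrite mxE sum_ord2. Qed.

Section Hermitian.
Variable R : realType.
Local Notation C := R[i].

Lemma mxadjM m n p (A : 'M[C]_(m, n)) (B : 'M[C]_(n, p)) :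
  mxadj (A *m B) = mxadj B *m mxadj A.
Proof. by rewrite /mxadj map_mxM trmx_mul. Qed.

Lemma mxadjK m n (A : 'M[C]_(m, n)) : mxadj (mxadj A) = A.
Proof. by apply/matrixP => i j; rewrite !mxE conjcK. Qed.

Lemma mxadjD m n (A B : 'M[C]_(m, n)) : mxadj (A + B) = mxadj A + mxadj B.
Proof. by apply/matrixP => i j; rewrite !mxE rmorphD. Qed.

Lemma mxadjZ m n (c : C) (A : 'M[C]_(m, n)) : mxadj (c *: A) = c^*%C *: mxadj A.
Proof. by apply/matrixP => i j; rewrite !mxE rmorphM. Qed.

Lemma mxadj_delta m n (i : 'I_m) (j : 'I_n) :
  mxadj (delta_mx i j : 'M[C]_(m, n)) = delta_mx j i.
Proof. by apply/matrixP => a b; rewrite !mxE rmorph_nat andbC. Qed.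

Lemma mxadj_realZ m n (x : R) (A : 'M[C]_(m, n)) : mxadj (x%:C *: A) = x%:C *: mxadj A.
Proof. by rewrite mxadjZ conjc_real. Qed.

Definition psdC n (A : 'M[C]_n) : Prop :=
  mxadj A = A /\ forall v : 'cV[C]_n, 0 <= (mxadj v *m A *m v) ord0 ord0.

Lemma psdP (A : 'M[C]_2) : psd A <-> psdC A.
Proof.
split=> -[hA hv]; split=> // v.
  by have [hIm hRe] := hv v; rewrite lecE /= hIm eqxx.
by have := hv v; rewrite lecE => /andP[/eqP hIm hRe]; rewrite hIm.
Qed.

Lemma psdC_add n (A B : 'M[C]_n) : psdC A -> psdC B -> psdC (A + B).
Proof.
move=> [hA hAv] [hB hBv]; split; first by rewrite mxadjD hA hB.
by move=> v; rewrite mulmxDr mulmxDl mxE addr_ge0.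
Qed.

Lemma psdC_sum n m (F : 'I_m -> 'M[C]_n) :
  (forall j, psdC (F j)) -> psdC (\sum_(j < m) F j).
Proof.
move=> hF; elim/big_rec: _ => [|j A _]; last exact/psdC_add/hF.
split=> [|v]; last by rewrite mulmx0 mul0mx mxE.
by apply/matrixP => i j; rewrite !mxE rmorph0.
Qed.

Lemma psdC_conj m n (B : 'M[C]_(m, n)) (A : 'M[C]_n) :
  psdC A -> psdC (B *m A *m mxadj B).
Proof.
move=> [hA hAv]; split; first by rewrite !mxadjM mxadjK hA mulmxA.
by move=> v; have := hAv (mxadj B *m v); rewrite mxadjM mxadjK !mulmxA.
Qed.

Lemma psdC_diag_ge0 n (A : 'M[C]_n) i : psdC A -> 0 <= A i i.
Proof.
case=> _ /(_ (delta_mx i ord0)).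
by rewrite mxadj_delta -rowE -colE !mxE.
Qed.

Lemma psdC_herm n (A : 'M[C]_n) i j : psdC A -> A j i = (A i j)^*%C.
Proof. by case=> hA _; rewrite -{1}hA !mxE. Qed.

End Hermitian.

Section Qubit.
Variable R : realType.
Local Notation C := R[i].
Local Notation M2 := 'M[C]_2.

Lemma ReD (x y : C) : complex.Re (x + y) = complex.Re x + complex.Re y.
Proof. by case: x; case: y. Qed.

Definition diag2 (a b : C) : M2 :=
  \matrix_(i, j) (if i == j then (if i == i0 then a else b) else 0).

Lemma diag2_subC (a b c : C) : diag2 a b - c%:M = diag2 (a - c) (b - c).
Proof. by apply: matrix2P; rewrite !mxE /= ?subr0. Qed.

Lemma diag2E (A : M2) : A i0 i1 = 0 -> A i1 i0 = 0 -> A = diag2 (A i0 i0) (A i1 i1).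
Proof. by move=> h01 h10; apply: matrix2P; rewrite !mxE. Qed.

Lemma conjc_ge0 (a : C) : 0 <= a -> a^*%C = a.
Proof. by case: a => x y; rewrite lecE /= => /andP[/eqP -> _]; rewrite oppr0. Qed.

Lemma psdC_diag2 (a b : C) : 0 <= a -> 0 <= b -> psdC (diag2 a b).
Proof.
move=> ha hb; split=> [|v].
  by apply: matrix2P; rewrite !mxE /= ?conjc_ge0 // oppr0.
rewrite !mulmx2E !mxE /=; set x := v i0 ord0; set y := v i1 ord0.
have -> : (x^*%C * a + y^*%C * 0) * x + (x^*%C * 0 + y^*%C * b) * y
          = a * (x * x^*%C) + b * (y * y^*%C) by ring.
by apply: addr_ge0; apply: mulr_ge0; rewrite ?mulcJ_ge0.
Qed.

Section Channel.
Variable L : M2 -> M2.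
Hypothesis hL : channel L.

Lemma channelD A B : L (A + B) = L A + L B.
Proof.
case: hL => n [K [_ hK]]; rewrite !hK -big_split; apply: eq_bigr => j _.
by rewrite mulmxDr mulmxDl.
Qed.

Lemma channelZ c A : L (c *: A) = c *: L A.
Proof.
case: hL => n [K [_ hK]]; rewrite !hK scaler_sumr; apply: eq_bigr => j _.
by rewrite -scalemxAr -scalemxAl.
Qed.

Lemma channel_psdC A : psdC A -> psdC (L A).
Proof. by case: hL => n [K [_ ->]] hA; apply: psdC_sum => j; apply: psdC_conj. Qed.

Lemma channel_tr A : \tr (L A) = \tr A.
Proof.
case: hL => n [K [hK ->]]; rewrite raddf_sum /=.
under eq_bigr do rewrite mxtrace_mulC mulmxA.
by rewrite -raddf_sum -mulmx_suml hK mul1mx.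
Qed.

End Channel.

Definition min_eig_ge (q : R) (rho : M2) : Prop := density rho /\ psdC (rho - (q%:C)%:M).

Lemma min_eig_ge_unitary_conj (U rho : M2) q :
  unitary U -> min_eig_ge q rho -> min_eig_ge q (U *m rho *m mxadj U).
Proof.
move=> hU [[/psdP hrho htr] hq]; split; first split.
- exact/psdP/psdC_conj.
- by rewrite mxtrace_mulC mulmxA (mulmx1C hU) mul1mx.
- have <- : U *m (q%:C)%:M *m mxadj U = (q%:C)%:M.
    by rewrite mul_mx_scalar -scalemxAl hU scalemx1.
  by rewrite -mulmxBl -mulmxBr; apply: psdC_conj.
Qed.

Lemma p0_le_min_eig_ge (q : R) (rho : M2) : min_eig_ge q rho -> p0 rho <= 1 - q.
Proof.
move=> [[_ htr] /(psdC_diag_ge0 i1)].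
rewrite !mxE eqxx mulr1n subr_ge0 lecE /= => /andP[_ hq].
have := congr1 (@complex.Re R) htr; rewrite mxtrace2 ReD /p0 => /= <-; lra.
Qed.

Lemma mxadj_pauliX : mxadj (pauliX R) = pauliX R.
Proof. by apply: matrix2P; rewrite !mxE /= oppr0. Qed.

Lemma pauliX_unitary : unitary (pauliX R).
Proof. by rewrite /unitary mxadj_pauliX; apply: matrix2P; rewrite !(mulmx2E, mxE) /=; ring. Qed.

Lemma pauliX_conj_diag2 (a b : C) : pauliX R *m diag2 a b *m mxadj (pauliX R) = diag2 b a.
Proof. by rewrite mxadj_pauliX; apply: matrix2P; rewrite !(mulmx2E, mxE) /=; ring. Qed.

Lemma density_diag2 (rho : M2) : density rho -> rho i0 i1 = 0 -> rho i1 i0 = 0 ->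
  rho = diag2 (1 - complex.Re (rho i1 i1))%:C (complex.Re (rho i1 i1))%:C.
Proof.
move=> [/psdP hrho htr] h01 h10.
have hreal i : rho i i = (complex.Re (rho i i))%:C.
  have := psdC_diag_ge0 i hrho.
  by case: (rho i i) => a b; rewrite lecE /= => /andP[/eqP -> _].
have hRe : complex.Re (rho i0 i0) = 1 - complex.Re (rho i1 i1).
  by have := congr1 (@complex.Re R) htr; rewrite mxtrace2 ReD /= => <-; rewrite addrK.
by rewrite {1}(diag2E h01 h10) -hRe -!hreal.
Qed.

Lemma min_eig_ge_diag2 (q r : R) : 0 <= q -> q <= r -> q <= 1 - r ->
  min_eig_ge q (diag2 (1 - r)%:C r%:C).
Proof.
move=> hq hqr hqr'; split; first split.
- by apply/psdP/psdC_diag2; rewrite ler0c; apply: le_trans hq _.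
- by rewrite mxtrace2 !mxE /= -rmorphD subrK.
- by rewrite diag2_subC -!rmorphB; apply: psdC_diag2; rewrite ler0c subr_ge0.
Qed.

End Qubit.

Section Thermalization.
Variables (R : realType) (beta E : R).
Hypothesis hbE : 0 <= beta * E.
Local Notation C := R[i].
Local Notation M2 := 'M[C]_2.
Local Notation e := (expR (- (beta * E))).

Lemma boltzmann_le1 : e <= 1.
Proof. by rewrite expR_le1 oppr_le0. Qed.

Lemma scale_partition_gibbs : (1 + e)%:C *: gibbs beta E = diag2 1%:C e%:C.
Proof.
have hZ : 1 + e != 0 by rewrite gt_eqF // ltr_pwDr ?expR_gt0.
by apply: matrix2P; rewrite !mxE /= ?mulr0 // -rmorphM mulrC divfK.
Qed.

Lemma thermalization_id_ge (L : M2 -> M2) i :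
  dephasing_thermalization beta E L -> e%:C <= L 1%:M i i.
Proof.
case=> hch hfix _.
have hid : 1%:M = (1 + e)%:C *: gibbs beta E + (1 - e)%:C *: diag2 0 1.
  rewrite scale_partition_gibbs; apply: matrix2P; rewrite !mxE /= ?mulr0 ?mulr1 ?addr0 ?add0r //.
  by rewrite -rmorphD addrC subrK.
have -> : L 1%:M i i = diag2 1%:C e%:C i i + (1 - e)%:C * L (diag2 0 1) i i.
  by rewrite hid (channelD hch) !(channelZ hch) hfix scale_partition_gibbs !mxE.
have hpos : 0 <= (1 - e)%:C * L (diag2 0 1) i i.
  rewrite mulr_ge0 ?ler0c ?subr_ge0 ?boltzmann_le1 //.
  exact/psdC_diag_ge0/(channel_psdC hch)/psdC_diag2.
have hdiag : e%:C <= diag2 1%:C e%:C i i.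
  by case: (ord2P i) => ->; rewrite !mxE /= ?lecR ?boltzmann_le1.
by apply: le_trans hdiag _; rewrite lerDl.
Qed.

Lemma min_eig_ge_thermalization (L : M2 -> M2) (q : R) (rho : M2) :
  dephasing_thermalization beta E L -> 0 <= q -> min_eig_ge q rho ->
  min_eig_ge (e * q) (L rho).
Proof.
move=> hL hq [hrho hrhoq]; have [hch _ hdeph] := hL.
have [/psdP hrho_psd htr] := hrho.
have hLrho := channel_psdC hch hrho_psd.
have h01 : L rho i0 i1 = 0 := hdeph rho hrho.
have h10 : L rho i1 i0 = 0 by rewrite (psdC_herm i0 i1 hLrho) h01 conjc0.
have hdiag i : (e * q)%:C <= L rho i i.
  rewrite -(subrK (q%:C *: 1%:M) rho) (channelD hch) (channelZ hch) scalemx1.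
  rewrite mxE [X in _ + X]mxE -[(e * q)%:C]add0r mulrC rmorphM; apply: lerD.
    exact/psdC_diag_ge0/(channel_psdC hch).
  by apply: ler_wpM2l; rewrite ?ler0c // thermalization_id_ge.
split; first by split; [exact/psdP | rewrite (channel_tr hch)].
rewrite (diag2E h01 h10) diag2_subC.
by apply: psdC_diag2; rewrite subr_ge0.
Qed.

Lemma evolve_min_eig_ge (U : nat -> M2) (L : nat -> M2 -> M2) (rho0 : M2) (r : R) :
  (forall k, unitary (U k)) -> (forall k, dephasing_thermalization beta E (L k)) ->
  0 <= r -> min_eig_ge r rho0 -> forall k, min_eig_ge (e ^+ k * r) (evolve U L rho0 k).
Proof.
move=> hU hL hr hrho0; elim=> [|k IH] /=; first by rewrite expr0 mul1r.
rewrite exprS -mulrA; apply: (min_eig_ge_thermalization (hL k.+1)).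
  by rewrite mulr_ge0 // exprn_ge0 // expR_ge0.
exact: min_eig_ge_unitary_conj.
Qed.

Lemma beta_swapE (rho : M2) :
  beta_swap beta E rho = diag2 (rho i1 i1 + (1 - e)%:C * rho i0 i0) (e%:C * rho i0 i0).
Proof.
by apply: matrix2P; rewrite /beta_swap /sigma_plus /sigma_minus !(mulmx2E, mxE) /=; ring.
Qed.

Lemma beta_swap_channel : channel (beta_swap beta E).
Proof.
have hsqrt x : 0 <= x -> (Num.sqrt x)%:C * (Num.sqrt x)%:C = x%:C.
  by move=> hx; rewrite -rmorphM -expr2 sqr_sqrtr.
have he0 : 0 <= e by rewrite expR_ge0.
have he1 : 0 <= 1 - e by rewrite subr_ge0 boltzmann_le1.
pose K := [:: sigma_minus R; (Num.sqrt e)%:C *: sigma_plus R;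
              (Num.sqrt (1 - e))%:C *: (sigma_minus R *m sigma_plus R)].
exists 3, (fun j => K`_j); split=> [|rho];
  rewrite !big_ord_recl big_ord0 /= !mxadj_realZ -!scalemxAl -!scalemxAr !scalerA !hsqrt //;
  rewrite /beta_swap /sigma_plus /sigma_minus !mxadjM !mxadj_delta.
  by apply: matrix2P; rewrite !(mulmx2E, mxE) /=; ring.
by apply: matrix2P; rewrite !(mulmx2E, mxE) /=; ring.
Qed.

Lemma beta_swap_gibbs : beta_swap beta E (gibbs beta E) = gibbs beta E.
Proof.
have hZ : 1 + e != 0 by rewrite gt_eqF // ltr_pwDr ?expR_gt0.
rewrite beta_swapE; apply: matrix2P; rewrite !mxE /= ?mulr0 ?addr0 //.
all: by rewrite -?rmorphM -?rmorphD; congr _%:C; field.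
Qed.

Lemma beta_swap_dephasing_thermalization :
  dephasing_thermalization beta E (beta_swap beta E).
Proof.
split; [exact: beta_swap_channel | exact: beta_swap_gibbs |].
by move=> rho _; rewrite beta_swapE mxE.
Qed.

Lemma evolve_pauliX_beta_swap (r : R) k :
  evolve (fun _ => pauliX R) (fun _ => beta_swap beta E) (diag2 (1 - r)%:C r%:C) k
  = diag2 (1 - e ^+ k * r)%:C (e ^+ k * r)%:C.
Proof.
elim: k => [|k IH] /=; first by rewrite expr0 mul1r.
rewrite IH pauliX_conj_diag2 beta_swapE; apply: matrix2P; rewrite !mxE //=.
all: by rewrite -?rmorphM -?rmorphD exprS; congr _%:C; ring.
Qed.

End Thermalization.

Local Open Scope classical_set_scope.

Theorem corollary1 (R : realType) (E beta : R) (hE : 0 < E) (hbeta : 0 < beta)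
  (rho0 : 'M[R[i]]_2) (hrho : density rho0)
  (hdiag : rho0 i0 i1 = 0 /\ rho0 i1 i0 = 0)
  (hpop : complex.Re (rho0 i1 i1) <= complex.Re (rho0 i0 i0)) :
  let Uopt := fun _ : nat => pauliX R in
  let Lopt := fun _ : nat => beta_swap beta E in
  [/\ unitary (pauliX R),
      dephasing_thermalization beta E (beta_swap beta E),
      (forall (U : nat -> 'M[R[i]]_2) (L : nat -> 'M[R[i]]_2 -> 'M[R[i]]_2),
          (forall k, unitary (U k)) ->
          (forall k, dephasing_thermalization beta E (L k)) ->
          forall k, p0 (evolve U L rho0 k) <= p0 (evolve Uopt Lopt rho0 k)),
      (forall k : nat, p0 (evolve Uopt Lopt rho0 k)
                       = 1 - expR (- (k%:R * beta * E)) * (1 - p0 rho0))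
    & (fun k => p0 (evolve Uopt Lopt rho0 k)) @ \oo --> (1 : R)].
Proof.
move=> Uopt Lopt.
have hbE : 0 < beta * E by rewrite mulr_gt0.
set e := expR (- (beta * E)); set r := complex.Re (rho0 i1 i1).
have hrho0 : rho0 = diag2 (1 - r)%:C r%:C := density_diag2 hrho hdiag.1 hdiag.2.
have hp0 : p0 rho0 = 1 - r by rewrite hrho0 /p0 mxE.
have hopt k : p0 (evolve Uopt Lopt rho0 k) = 1 - e ^+ k * r.
  by rewrite hrho0 evolve_pauliX_beta_swap /p0 mxE.
split.
- exact: pauliX_unitary.
- exact/beta_swap_dephasing_thermalization/ltW.
- move=> U L hU hL k; rewrite hopt; apply: p0_le_min_eig_ge.
  have hr0 : 0 <= r.
    by have := psdC_diag_ge0 i1 ((psdP _).1 hrho.1); rewrite hrho0 mxE /= ler0c.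
  apply: evolve_min_eig_ge => //; first exact: ltW.
  by rewrite hrho0; apply: min_eig_ge_diag2; rewrite // -hp0.
- by move=> k; rewrite hopt hp0 subKr /e -expRM_natl mulrN mulrA.
- rewrite (funext hopt) -[X in _ --> X](subr0 1) -(mul0r r); apply: cvgB; first exact: cvg_cst.
  by apply: cvgMl; apply: cvg_expr; rewrite ger0_norm ?expR_ge0 // expR_lt1 oppr_lt0.
Qed.
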